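(* Let $n\ge1$ and let $\tau>0$ be real. For an integer $T\ge1$, let $N(T)$ be the number of integer vectors $w\in\{0,1,\dots,T-1\}^n$ such that $e(w/T)\le T^{\frac{1-\tau}{n+1}}$. Then $N(T)/T^n\to 0$ as $T\to\infty$.
   Context: For $\omega\in\mathbb{R}^n$, $R(\omega)=\{k\in\mathbb{Z}^n:\langle k,\omega\rangle\in\mathbb{Z}\}$, $|k|=\max_i|k_i|$, and $e(\omega)=\min_{k\in R(\omega)\setminus\{0\}}|k|$ (for $\omega=w/T$ with $w\in\mathbb{Z}^n$, $R(\omega)$ contains $T\mathbb{Z}^n$, so this minimum exists). *)

From HB Require Import structures.
From mathcomp Require Import all_boot all_order all_algebra.
From mathcomp Require Import all_classical all_reals all_analysis.
Set Implicit Arguments. Unset Strict Implicit. Unset Printing Implicit Defensive.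
Import Order.TTheory GRing.Theory Num.Theory.
Local Open Scope classical_set_scope.
Local Open Scope ring_scope.

Definition supnorm (n : nat) (k : 'rV[int]_n) : nat := (\max_(i < n) `|k ord0 i|)%N.

Definition dotZ (R : realType) (n : nat) (k : 'rV[int]_n) (om : 'rV[R]_n) : R :=
  \sum_(i < n) (k ord0 i)%:~R * om ord0 i.

Definition Rset (R : realType) (n : nat) (om : 'rV[R]_n) : set 'rV[int]_n :=
  [set k | dotZ k om \is a Num.int].

(* e(omega) = min_{k in R(omega) \ {0}} |k|, written as the infimum of the
   (nonempty, for rational omega) set of values |k|; the infimum of a nonempty
   set of naturals is attained, so it is the minimum. *)
Definition e (R : realType) (n : nat) (om : 'rV[R]_n) : R :=
  inf [set ((supnorm k)%:R : R) | k in [set k | Rset om k /\ k <> 0]].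

Definition omega (R : realType) (n T : nat) (w : {ffun 'I_n -> 'I_T}) : 'rV[R]_n :=
  \row_i (((w i : nat)%:R : R) / T%:R).

Definition Ncount (R : realType) (n : nat) (tau : R) (T : nat) : nat :=
  #|[set w : {ffun 'I_n -> 'I_T} |
      `[< e (omega R w) <= (T%:R : R) `^ ((1 - tau) / (n.+1)%:R) >]]|.

From HB Require Import structures.
From mathcomp Require Import all_boot all_order all_algebra.
From mathcomp Require Import all_classical all_reals all_analysis.
From mathcomp Require Import zify lra.
Import Order.TTheory GRing.Theory Num.Theory.
Local Open Scope classical_set_scope.
Local Open Scope ring_scope.
Set Implicit Arguments. Unset Strict Implicit.

(* If e(w/T) <= X then w has a nonzero relation [T | <k, w>] with |k| < X + 1,
   i.e. all coordinates of k in [-M, M] once M >= X + 1.  Such w are few: the map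
   w |-> (k, w with a coordinate i where k_i != 0 deleted, <k, w>/T) is injective,
   since <k, w> recovers the deleted coordinate, and <k, w>/T is at most n M in
   absolute value.  Hence N(T) <= (2M+1)^n T^(n-1) (2nM+1), and with
   M ~ T^((1-tau)/(n+1)) this is O(T^(n-tau) + T^(n-1)). *)

Lemma expr_affine_le (R : realFieldType) (X : R) k : 0 <= X ->
  (2 * X + 5) ^+ k <= 7 ^+ k * (X ^+ k + 1).
Proof.
move=> X_ge0; have Xk_ge0 : 0 <= X ^+ k by exact: exprn_ge0.
have [X_le1|X_gt1] := leP X 1.
  apply: (@le_trans _ _ (7 ^+ k)); first by apply: lerXn2r; rewrite ?nnegrE //; lra.
  by rewrite ler_peMr ?exprn_ge0 //; lra.
apply: (@le_trans _ _ ((7 * X) ^+ k)); first by apply: lerXn2r; rewrite ?nnegrE //; lra.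
by rewrite exprMn ler_wpM2l ?exprn_ge0 //; lra.
Qed.

Lemma cvg_powRN_natr (R : realType) (r : R) : 0 < r ->
  ((fun T : nat => (T%:R : R) `^ (- r)) : R^nat) @ \oo --> 0.
Proof.
move=> r_gt0; apply/cvgr0Pnorm_lt => eps eps_gt0.
set B := eps^-1 `^ r^-1; have B_ge0 : 0 <= B by exact: powR_ge0.
exists (Num.truncn B).+1 => // T /= BT.
have {}BT : B < T%:R by apply: lt_le_trans (truncnS_gt B) _; rewrite ler_nat.
have T_gt0 : 0 < (T%:R : R) := le_lt_trans B_ge0 BT.
rewrite ger0_norm ?powR_ge0 // powRN -[eps]invrK ltf_pV2 ?posrE ?powR_gt0 ?invr_gt0 //.
have -> : eps^-1 = B `^ r.
  by rewrite -powRrM mulVf ?gt_eqF // powRr1 // ltW // invr_gt0.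
by apply: gt0_ltr_powR => //; rewrite nnegrE.
Qed.

Section Relations.
Variables (m M T : nat).

(* Vectors of [-M, M]^(m+1) are encoded by their shift into [0, 2M]^(m+1). *)
Definition centered (kk : {ffun 'I_m.+1 -> 'I_(2 * M).+1}) (i : 'I_m.+1) : int :=
  (kk i : nat)%:Z - M%:Z.

Definition dot_int kk (w : {ffun 'I_m.+1 -> 'I_T}) : int :=
  \sum_i centered kk i * (w i : nat)%:Z.

Definition is_relation w kk : bool :=
  [exists i, centered kk i != 0] && (T%:Z %| dot_int kk w)%Z.

Definition Resonant := [set w | [exists kk, is_relation w kk]].

Lemma centered_le kk i : `|centered kk i| <= M%:Z.
Proof. by rewrite /centered; have := ltn_ord (kk i); lia. Qed.

Lemma dot_int_le kk w : `|dot_int kk w| <= (m.+1 * M * T)%:Z.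
Proof.
rewrite /dot_int; apply: le_trans (ler_norm_sum _ _ _) _.
have -> : (m.+1 * M * T)%:Z = \sum_(i < m.+1) (M * T)%:Z.
  by rewrite sumr_const card_ord -[in RHS]natz -mulrnA natz; congr Posz; lia.
apply: ler_sum => i _; rewrite normrM PoszM; apply: ler_pM => //.
  exact: centered_le.
by have := ltn_ord (w i); lia.
Qed.

Hypothesis T_gt0 : (0 < T)%N.

Lemma dot_int_quot_le kk w :
  (T%:Z %| dot_int kk w)%Z -> `|(dot_int kk w %/ T)%Z| <= (m.+1 * M)%:Z.
Proof.
move=> dvdT; have := dot_int_le kk w.
rewrite -{1}(divzK dvdT) normrM (_ : `|T%:Z| = T%:Z) // !PoszM => h.
by rewrite -(ler_pM2r (_ : 0 < T%:Z)) // ltz_nat.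
Qed.

Lemma eq_of_dot_int kk i (w1 w2 : {ffun 'I_m.+1 -> 'I_T}) : centered kk i != 0 ->
  (forall j, j != i -> w1 j = w2 j) -> dot_int kk w1 = dot_int kk w2 -> w1 = w2.
Proof.
move=> ki off; rewrite /dot_int (bigD1 i) //= [in RHS](bigD1 i) //=.
rewrite (eq_bigr (fun j => centered kk j * (w2 j : nat)%:Z)) => [|j /off -> //].
move=> /addIr /(mulfI ki) [] wi; apply/ffunP => j.
by case: (eqVneq j i) => [->|/off]; [exact: val_inj|].
Qed.

Definition encode (w : {ffun 'I_m.+1 -> 'I_T}) :
  {ffun 'I_m.+1 -> 'I_(2 * M).+1} * {ffun 'I_m -> 'I_T} * 'I_(2 * (m.+1 * M)).+1 :=
  let kk := odflt [ffun=> ord0] [pick kk | is_relation w kk] in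
  let i := odflt ord0 [pick i | centered kk i != 0] in
  (kk, [ffun j => w (lift i j)],
   inord (absz ((dot_int kk w %/ T)%Z + (m.+1 * M)%:Z))).

Lemma pick_relation w : w \in Resonant ->
  exists2 kk, [pick kk | is_relation w kk] = Some kk & is_relation w kk.
Proof.
rewrite inE => /existsP[k0 rel0].
by case: pickP => [kk rel|/(_ k0)]; [exists kk | rewrite rel0].
Qed.

Lemma encode_inj : {in Resonant &, injective encode}.
Proof.
move=> w1 w2 /pick_relation[kk pick1 rel1] /pick_relation[kk2 pick2 rel2].
rewrite /encode pick1 pick2 => -[kk2E]; subst kk2 => /=.
move: rel1 rel2 => /andP[/existsP[i0 ki0] dvd1] /andP[_ dvd2].
case: pickP => [i ki|/(_ i0)]; last by rewrite ki0.
move=> wl /(congr1 val) /=; have q1 := dot_int_quot_le dvd1.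
have q2 := dot_int_quot_le dvd2.
rewrite !inordK; [|by move: q2; set q := (_ %/ _)%Z; lia
                  |by move: q1; set q := (_ %/ _)%Z; lia].
move=> eq_abs; have eq_quot : (dot_int kk w1 %/ T)%Z = (dot_int kk w2 %/ T)%Z.
  by move: eq_abs q1 q2; set x := (_ %/ _)%Z; set y := (_ %/ _)%Z; lia.
apply: (eq_of_dot_int ki); last by rewrite -(divzK dvd1) -(divzK dvd2) eq_quot.
move=> j; case: (unliftP i j) => [j' -> _|-> /eqP//].
by have := congr1 (fun f : {ffun 'I_m -> 'I_T} => f j') wl; rewrite !ffunE.
Qed.

Lemma card_Resonant :
  (#|Resonant| <= (2 * M).+1 ^ m.+1 * T ^ m * (2 * (m.+1 * M)).+1)%N.
Proof.
rewrite -(card_in_imset encode_inj); apply: leq_trans (max_card _) _.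
by rewrite !card_prod !card_ffun !card_ord.
Qed.

End Relations.

Section RationalPoints.
Variable R : realType.

Lemma dotZ_omega m M T (w : {ffun 'I_m.+1 -> 'I_T}) (k : 'rV[int]_m.+1) kk :
  (forall i, centered kk i = k ord0 i) ->
  dotZ k (omega R w) = (@dot_int m M T kk w)%:~R / T%:R.
Proof.
move=> hk; rewrite /dotZ /dot_int rmorph_sum mulr_suml; apply: eq_bigr => i _.
by rewrite /omega mxE hk rmorphM /= -pmulrn mulrA.
Qed.

Lemma e_le_relation m T (w : {ffun 'I_m.+1 -> 'I_T}) (X : R) : (0 < T)%N ->
  e (omega R w) <= X ->
  exists k : 'rV[int]_m.+1,
    [/\ k != 0, dotZ k (omega R w) \is a Num.int & ((supnorm k)%:R : R) < X + 1].
Proof.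
move=> T_gt0 eX.
set S := [set ((supnorm k)%:R : R) | k in [set k | Rset (omega R w) k /\ k <> 0]].
have S_inf : has_inf S.
  split; last by exists 0 => x [k _ <-]; exact: ler0n.
  exists (supnorm (const_mx T%:Z : 'rV[int]_m.+1))%:R.
  exists (const_mx T%:Z) => //; split.
    rewrite /Rset /dotZ /= /omega.
    apply: rpred_sum => i _; rewrite !mxE -pmulrn mulrCA divff ?mulr1 ?natr_int //.
    by rewrite pnatr_eq0 -lt0n.
  by move/matrixP/(_ ord0 ord0); rewrite !mxE => /eqP; lia.
have [_ [k [Rk /eqP k_neq0] <-] kX] := inf_adherent ltr01 S_inf.
by exists k; split=> //; apply: lt_le_trans kX _; rewrite lerD2r.
Qed.

Lemma Ncount_le_Resonant m (tau : R) T M : (0 < T)%N ->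
  (T%:R : R) `^ ((1 - tau) / (m.+2)%:R) + 1 <= M%:R ->
  (Ncount m.+1 tau T <= #|@Resonant m M T|)%N.
Proof.
move=> T_gt0 XM; apply: subset_leq_card; apply/fintype.subsetP => w.
rewrite !inE => /asboolP /(e_le_relation T_gt0) [k [k_neq0 Rk kX]].
have k_lt : (supnorm k < M)%N by rewrite -(ltr_nat R); apply: lt_le_trans XM.
have k_le i : (`|k ord0 i| <= supnorm k)%N.
  exact: (@leq_bigmax _ (fun j => `|k ord0 j|%N) i).
pose kk : {ffun 'I_m.+1 -> 'I_(2 * M).+1} := [ffun i => inord (absz (k ord0 i + M%:Z))].
have kkE i : centered kk i = k ord0 i.
  move: (k_le i) k_lt; rewrite /centered ffunE; set x := k ord0 i => x_le x_lt.
  by rewrite inordK; lia.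
apply/existsP; exists kk; apply/andP; split.
  case: (pickP (fun i => k ord0 i != 0)) => [i ki|k0].
    by apply/existsP; exists i; rewrite kkE.
  case/eqP: k_neq0; apply/matrixP => a b; rewrite mxE (ord1 a).
  by have /negbFE/eqP := k0 b.
move: Rk; rewrite (dotZ_omega w kkE) => /intrP[z zE].
apply/dvdzP; exists z; apply: (@intr_inj R).
by rewrite intrM -pmulrn -zE divfK // pnatr_eq0 -lt0n.
Qed.

Lemma Ncount_le_nat m (tau : R) T M : (0 < T)%N ->
  (T%:R : R) `^ ((1 - tau) / (m.+2)%:R) + 1 <= M%:R ->
  (Ncount m.+1 tau T <= m.+1 * (2 * M).+1 ^ m.+2 * T ^ m)%N.
Proof.
move=> T_gt0 XM; apply: leq_trans (Ncount_le_Resonant T_gt0 XM) _.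
apply: leq_trans (card_Resonant _ _ T_gt0) _.
rewrite [((2 * M).+1 ^ m.+2)%N]expnS.
by set P := ((2 * M).+1 ^ m.+1)%N; set Q := (T ^ m)%N; nia.
Qed.

Lemma Ncount_le_powR m (tau : R) T : (0 < T)%N ->
  (Ncount m.+1 tau T)%:R / T%:R ^+ m.+1 <=
  (m.+1)%:R * 7 ^+ m.+2 * ((T%:R : R) `^ (- tau) + (T%:R : R) `^ (-1)).
Proof.
move=> T_gt0; have T_gt0R : 0 < (T%:R : R) by rewrite ltr0n.
set X := (T%:R : R) `^ ((1 - tau) / (m.+2)%:R); have X_ge0 : 0 <= X by exact: powR_ge0.
set M := (Num.truncn X).+2.
have XM : X + 1 <= M%:R by rewrite /M -addn1 natrD lerD2r ltW ?truncnS_gt.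
have M_le : M%:R <= X + 2 by rewrite /M -addn2 natrD lerD2r truncn_le.
have := Ncount_le_nat T_gt0 XM; rewrite -(ler_nat R) => N_le.
have XE : X ^+ m.+2 = (T%:R : R) `^ (- tau) * T%:R.
  rewrite -powR_mulrn // -powRrM divfK ?pnatr_eq0 // addrC powRD ?powRr1 ?ltW //.
  by apply/implyP => _; rewrite gt_eqF.
have TE : (T%:R : R) `^ (-1) * T%:R = 1 by rewrite powR_inv1 ?mulVf ?gt_eqF // ltW.
rewrite ler_pdivrMr ?exprn_gt0 // [T%:R ^+ _]exprS mulrA -[_ * _ * T%:R]mulrA mulrDl TE -XE.
apply: le_trans N_le _; rewrite natrM natrM !natrX.
apply: ler_wpM2r; first by rewrite exprn_ge0 // ltW.
rewrite -mulrA; apply: ler_wpM2l => //.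
apply: le_trans (expr_affine_le m.+2 X_ge0); apply: lerXn2r; rewrite ?nnegrE //.
- by lra.
- by rewrite -addn1 natrD natrM; lra.
Qed.

End RationalPoints.

Theorem mainTheorem4 (R : realType) (n : nat) (hn : (1 <= n)%N)
  (tau : R) (htau : 0 < tau) :
  ((fun T : nat => ((Ncount n tau T)%:R : R) / (T%:R ^+ n)) : R^nat) @ \oo --> 0.
Proof.
case: n hn => [//|m] _; set C : R := (m.+1)%:R * 7 ^+ m.+2.
have bound_cvg :
    ((fun T : nat => C * ((T%:R : R) `^ (- tau) + (T%:R : R) `^ (-1))) : R^nat) @ \oo --> 0.
  rewrite -(mulr0 C) -(addr0 0).
  exact: cvgMl_tmp (cvgD (cvg_powRN_natr htau) (cvg_powRN_natr ltr01)).
apply: (squeeze_cvgr (f := cst 0) _ _ bound_cvg).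
- exists 1%N => // T /= T_ge1.
  by rewrite divr_ge0 ?exprn_ge0 ?ler0n ?Ncount_le_powR.
- by apply/cvgr0Pnorm_lt => e e_gt0; exists 0%N => // x _; rewrite normr0.
Qed.
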